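(* Let $V$ be a finite nonempty set and $f:\{0,1\}^V\to\{0,1\}^V$. Every subnetwork of $f$ (in particular $f$ itself) has exactly one fixed point if and only if $f$ has no even-self-dual and no odd-self-dual subnetwork.
   Context: For $x,y\in\{0,1\}^V$, $x\oplus y$ is componentwise addition mod 2, $1$ denotes the all-ones point, and $\|x\|$ is the number of components equal to $1$; $x$ is even (odd) if $\|x\|$ is even (odd). The conjugate of a network $g$ on $W$ is $\tilde g(x)=g(x)\oplus x$. For nonempty $I\subseteq V$ and $z\in\{0,1\}^{V\setminus I}$, the subnetwork of $f$ induced by $z$ is $h:\{0,1\}^I\to\{0,1\}^I$ with $h(x|_I)=f(x)|_I$ for all $x\in\{0,1\}^V$ whose restriction to $V\setminus I$ is $z$ ($f$ is a subnetwork of itself). A network $g$ on $W$ is self-dual if $g(x\oplus 1)=g(x)\oplus 1$ for all $x$; even (odd) if $\tilde g(\{0,1\}^W)$ is exactly the set of even (odd) points; even-self-dual (odd-self-dual) if both even (odd) and self-dual. *)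

From mathcomp Require Import all_boot.
Set Implicit Arguments. Unset Strict Implicit. Unset Printing Implicit Defensive.

Definition point (W : finType) := {ffun W -> bool}.
Definition network (W : finType) := point W -> point W.

Definition xorp (W : finType) (x y : point W) : point W := [ffun v => addb (x v) (y v)].
Definition ones (W : finType) : point W := [ffun _ => true].
Definition wt (W : finType) (x : point W) : nat := #|[set v | x v]|.
Definition even_pt (W : finType) (x : point W) : bool := ~~ odd (wt x).
Definition odd_pt (W : finType) (x : point W) : bool := odd (wt x).

Definition conjn (W : finType) (g : network W) : network W := fun x => xorp (g x) x.

Definition self_dual (W : finType) (g : network W) : Prop :=
  forall x, g (xorp x (ones W)) = xorp (g x) (ones W).

Definition even_net (W : finType) (g : network W) : Prop :=
  forall y : point W, (exists x, conjn g x = y) <-> even_pt y.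
Definition odd_net (W : finType) (g : network W) : Prop :=
  forall y : point W, (exists x, conjn g x = y) <-> odd_pt y.

Definition even_self_dual (W : finType) (g : network W) : Prop :=
  even_net g /\ self_dual g.
Definition odd_self_dual (W : finType) (g : network W) : Prop :=
  odd_net g /\ self_dual g.

Definition subT (V : finType) (I : {set V}) : finType := {v : V | v \in I}.

Definition glue (V : finType) (I : {set V}) (xI : point (subT I)) (z : point V)
  : point V :=
  [ffun v => if @insub V (fun v => v \in I) (subT I) v is Some u then xI u else z v].

(* subnetwork of f on I induced by the restriction of z to V \ I
   (only the values of z outside I matter) *)
Definition subnet (V : finType) (f : network V) (I : {set V}) (z : point V)
  : network (subT I) :=
  fun xI => [ffun u : subT I => f (glue xI z) (val u)].

Arguments subnet {V} f I z _.
Arguments glue {V} {I} xI z.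

Definition unique_fixed_point (W : finType) (g : network W) : Prop :=
  exists! x, g x = x.

(* The fixed points of h are the preimages of 0 under the conjugate h~, so h
   has a unique fixed point as soon as h~ is a bijection. By strong induction
   on |I|, every subnetwork of f on a smaller set has a bijective conjugate;
   hence the conjugate of a subnetwork on I is locally bijective: for each
   coordinate j and each value of x_j, the components off j of h~(x) are a
   bijective function of the components off j of x. A locally bijective map
   that is not injective identifies exactly antipodal points x and 1 (+) x,
   and its image is a parity class of points; for h~ this says that h is
   even- or odd-self-dual. Conversely, a self-dual network has its fixed
   points in antipodal pairs, so never exactly one. *)
From mathcomp Require Import all_boot.
Set Implicit Arguments. Unset Strict Implicit. Unset Printing Implicit Defensive.

Definition compl (W : finType) (x : point W) : point W := xorp x (ones W).

Definition flip (W : finType) (j : W) (y : point W) : point W :=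
  [ffun k => if k == j then ~~ y k else y k].

Lemma complE (W : finType) (x : point W) v : compl x v = ~~ x v.
Proof. by rewrite !ffunE addbT. Qed.

Lemma complK (W : finType) : involutive (@compl W).
Proof. by move=> x; apply/ffunP => v; rewrite !complE negbK. Qed.

Lemma flipE (W : finType) (j : W) y k :
  flip j y k = if k == j then ~~ y k else y k.
Proof. by rewrite ffunE. Qed.

Lemma flipK (W : finType) (j : W) : involutive (flip j).
Proof. by move=> y; apply/ffunP => k; rewrite !flipE; case: eqP; rewrite ?negbK. Qed.

Lemma flipC (W : finType) (j k : W) y : flip j (flip k y) = flip k (flip j y).
Proof. by apply/ffunP => l; rewrite !flipE; case: (l == j); case: (l == k). Qed.

Lemma xorp_flipl (W : finType) (j : W) (y w : point W) :
  xorp (flip j y) w = flip j (xorp y w).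
Proof.
by apply/ffunP => k; rewrite !(flipE, ffunE); case: (k == j); case: (y k); case: (w k).
Qed.

Lemma odd_wt_xorp (W : finType) (a b : point W) :
  odd (wt (xorp a b)) = odd (wt a) (+) odd (wt b).
Proof.
rewrite /wt; set A := [set v | a v]; set B := [set v | b v].
have -> : [set v | xorp a b v] = (A :\: B) :|: (B :\: A).
  by apply/setP => v; rewrite !inE ffunE; case: (a v); case: (b v).
rewrite cardsU.
have -> : (A :\: B) :&: (B :\: A) = set0.
  by apply/setP => v; rewrite !inE; case: (a v); case: (b v).
rewrite cards0 subn0 !cardsD oddD !oddB ?subset_leq_card ?subsetIl //.
by rewrite [B :&: A]setIC; case: (odd #|A|); case: (odd #|B|); case: (odd _).
Qed.

Lemma odd_wt_flip (W : finType) (j : W) y : odd (wt (flip j y)) = ~~ odd (wt y).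
Proof.
have -> : flip j y = xorp y [ffun k => k == j].
  by apply/ffunP => k; rewrite flipE !ffunE; case: eqP; rewrite ?addbT ?addbF.
rewrite odd_wt_xorp /wt.
have -> : [set v | [ffun k => k == j] v] = [set j] by apply/setP => k; rewrite !inE ffunE.
by rewrite cards1 addbT.
Qed.

Lemma wt_flip_true (W : finType) (j : W) (x : point W) :
  x j -> (wt (flip j x)).+1 = wt x.
Proof.
move=> xj; rewrite /wt (cardsD1 j [set v | x v]) inE xj add1n; congr _.+1.
by apply: eq_card => v; rewrite !inE flipE; case: eqP => [->|]; rewrite ?xj.
Qed.

Lemma wt_gt0 (W : finType) (x : point W) : 0 < wt x -> exists j, x j.
Proof. by case/card_gt0P => j; rewrite inE; exists j. Qed.

Lemma wt_xorp_eq0 (W : finType) (y w : point W) : wt (xorp y w) = 0 -> y = w.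
Proof.
move/cards0_eq/setP => D0; apply/ffunP => v.
by move: (D0 v); rewrite !inE ffunE; case: (y v); case: (w v).
Qed.

Definition locally_surjective (W : finType) (G : network W) :=
  forall (j : W) (b : bool) (y : point W),
    exists x : point W, x j = b /\ forall k, k != j -> G x k = y k.

Definition locally_injective (W : finType) (G : network W) :=
  forall (j : W) (x x' : point W), x j = x' j ->
    (forall k, k != j -> G x k = G x' k) -> x = x'.

Definition antipodal_value (W : finType) (G : network W) (y : point W) :=
  exists a, G a = y /\ G (compl a) = y.

Section LocallyBijective.

Variables (W : finType) (G : network W).
Hypothesis Gsur : locally_surjective G.
Hypothesis Ginj : locally_injective G.

Lemma locally_injective_fiber x x' : G x = G x' -> x = x' \/ x' = compl x.
Proof.
move=> Gxx'.
case: (boolP [exists j, x' j == x j]) => [/existsP [j /eqP xj] | /existsPn ne].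
  by left; apply: (@Ginj j) => // k _; rewrite Gxx'.
by right; apply/ffunP => v; rewrite complE; move: (ne v); case: (x v); case: (x' v).
Qed.

Lemma antipodal_flip_notin_image y j c : antipodal_value G y -> G c <> flip j y.
Proof.
move=> [a [Ga Gca]] Gc.
(* one of a, compl a agrees with c at j, and local injectivity identifies them *)
pose a' := if a j == c j then a else compl a.
have Ga' : G a' = y by rewrite /a'; case: ifP.
have a'j : a' j = c j.
  by rewrite /a'; case: ifP => [/eqP//|]; rewrite complE; case: (a j); case: (c j).
have c_a' : c = a'.
  apply: (@Ginj j) => [|k kj]; first by rewrite a'j.
  by rewrite Gc Ga' flipE (negbTE kj).
by move: Gc; rewrite c_a' Ga' => /ffunP /(_ j); rewrite flipE eqxx; case: (y j).
Qed.

Lemma antipodal_flip2 y j k :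
  antipodal_value G y -> j != k -> antipodal_value G (flip j (flip k y)).
Proof.
move=> Gy jk; set y' := flip j (flip k y).
have agree_off_k x : (forall l, l != k -> G x l = y' l) -> G x = y'.
  move=> Gx; apply/ffunP => l; case: (eqVneq l k) => [-> | lk]; last exact: Gx.
  case: (eqVneq (G x k) (y' k)) => // Gxk.
  (* otherwise G x = flip j y, which is excluded *)
  have : G x = flip k y'.
    apply/ffunP => l'; rewrite flipE; case: (eqVneq l' k) => [->|]; last exact: Gx.
    by move: Gxk; case: (G x k); case: (y' k).
  by rewrite /y' flipC flipK => /(antipodal_flip_notin_image Gy) [].
have [x0 [x0k /agree_off_k G0]] := Gsur k false y'.
have [x1 [x1k /agree_off_k G1]] := Gsur k true y'.
have /locally_injective_fiber [x01 | x1E] : G x0 = G x1 by rewrite G0 G1.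
  by move: x0k; rewrite x01 x1k.
by exists x0; rewrite -x1E.
Qed.

Lemma antipodal_even_distance w y :
  antipodal_value G w -> ~~ odd (wt (xorp y w)) -> antipodal_value G y.
Proof.
move=> Gw; move Hn: (wt (xorp y w)) => n.
elim/ltn_ind: n y Hn => n IH y Hn even_n.
case: (posnP n) => [n0 | n_gt0]; first by rewrite (@wt_xorp_eq0 _ y w) // Hn n0.
have [j dj] : exists j, xorp y w j by apply: wt_gt0; rewrite Hn.
set d := xorp y w in Hn dj.
have [k fk] : exists k, flip j d k.
  apply: wt_gt0; move: even_n.
  by rewrite -Hn -(wt_flip_true dj) /= negbK; case: (wt _).
have kj : k != j by apply: contraTneq fk => ->; rewrite flipE eqxx dj.
have dk : d k by move: fk; rewrite flipE (negbTE kj).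
have fkj : flip k d j by rewrite flipE eq_sym (negbTE kj).
have wt_y'' : (wt (xorp (flip j (flip k y)) w)).+2 = n.
  by rewrite !xorp_flipl -/d (wt_flip_true fkj) (wt_flip_true dk).
have /antipodal_flip2 : antipodal_value G (flip j (flip k y)).
  apply: (IH _ _ _ erefl); first by rewrite -wt_y''.
  by move: even_n; rewrite -wt_y'' /= negbK.
by move=> /(_ j k); rewrite [flip k (flip j _)]flipC !flipK; apply; rewrite eq_sym.
Qed.

Lemma injective_or_antipodal : injective G \/ exists w, antipodal_value G w.
Proof.
case: (boolP [forall x, forall x', (G x == G x') ==> (x == x')]) => [/forallP inj|].
  left => x x' Gxx'; move: (inj x) => /forallP /(_ x') /implyP.
  by rewrite Gxx' eqxx => /(_ isT) /eqP.
move=> /forallPn [x /forallPn [x']]; rewrite negb_imply => /andP [/eqP Gxx' ne].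
right; exists (G x), x; split => //.
by case: (locally_injective_fiber Gxx') => [xx'|<-]; rewrite ?xx' ?eqxx in ne.
Qed.

Lemma antipodal_image w y :
  antipodal_value G w -> (exists c, G c = y) <-> ~~ odd (wt (xorp y w)).
Proof.
move=> Gw; split; last by move=> /(antipodal_even_distance Gw) [a [Ga _]]; exists a.
move=> [c Gc]; apply/negP => odd_yw.
have [j dj] : exists j, xorp y w j by apply: wt_gt0; case: (wt _) odd_yw.
have /antipodal_flip_notin_image : antipodal_value G (flip j y).
  apply: (antipodal_even_distance Gw).
  by rewrite xorp_flipl odd_wt_flip negbK.
by move=> /(_ j c); rewrite flipK; apply.
Qed.

Lemma antipodal_compl_invariant w z : antipodal_value G w -> G (compl z) = G z.
Proof.
move=> Gw; have [a [Ga Gca]] : antipodal_value G (G z).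
  by apply: (antipodal_even_distance Gw); apply/(antipodal_image _ Gw); exists z.
by case: (locally_injective_fiber Ga) => [<-|->]; rewrite ?complK Ga Gca.
Qed.

End LocallyBijective.

Lemma conjn_compl_invariant_self_dual (W : finType) (h : network W) :
  (forall z, conjn h (compl z) = conjn h z) -> self_dual h.
Proof.
move=> inv z; apply/ffunP => v; move/ffunP/(_ v): (inv z).
by rewrite !ffunE; case: (h _ v); case: (h z v); case: (z v).
Qed.

Lemma locally_bijective_conjn (W : finType) (h : network W) :
  locally_surjective (conjn h) -> locally_injective (conjn h) ->
  injective (conjn h) \/ even_self_dual h \/ odd_self_dual h.
Proof.
move=> Gsur Ginj.
case: (injective_or_antipodal Ginj) => [|[w Gw]]; first by left.
have sd : self_dual h.
  by apply: conjn_compl_invariant_self_dual => z; apply: antipodal_compl_invariant Gw.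
have image y := antipodal_image Gsur Ginj y Gw.
right; case Hw: (odd (wt w)); [right | left]; split => // y;
  by have := image y; rewrite odd_wt_xorp Hw ?addbT ?addbF ?negbK; exact: id.
Qed.

Definition restr (V : finType) (I : {set V}) (x : point V) : point (subT I) :=
  [ffun u => x (val u)].

Lemma glue_val (V : finType) (I : {set V}) (xI : point (subT I)) z (u : subT I) :
  glue xI z (val u) = xI u.
Proof. by rewrite ffunE valK. Qed.

Lemma glue_notin (V : finType) (I : {set V}) (xI : point (subT I)) z v :
  v \notin I -> glue xI z v = z v.
Proof. by move=> vI; rewrite ffunE insubN. Qed.

Lemma glue_restr (V : finType) (I : {set V}) (x z : point V) :
  (forall v, v \notin I -> x v = z v) -> glue (restr I x) z = x.
Proof.
move=> xz; apply/ffunP => v; case: (boolP (v \in I)) => vI.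
  by rewrite ffunE (insubT (fun v => v \in I) vI) ffunE SubK.
by rewrite glue_notin // xz.
Qed.

Lemma restr_glue (V : finType) (I : {set V}) (xI : point (subT I)) z :
  restr I (glue xI z) = xI.
Proof. by apply/ffunP => u; rewrite ffunE glue_val. Qed.

Lemma conjn_subnetE (V : finType) (f : network V) I z (xI : point (subT I)) u :
  conjn (subnet f I z) xI u = conjn f (glue xI z) (val u).
Proof. by rewrite !ffunE valK. Qed.

Definition conjn_subnets_injective (V : finType) (f : network V) (I : {set V}) :=
  forall z, injective (conjn (subnet f I z)).

Section SubnetConjugates.

Variables (V : finType) (f : network V) (I : {set V}).
Hypothesis injI : conjn_subnets_injective f I.

Lemma conjn_subnets_injective_agree (x y : point V) :
  (forall v, v \notin I -> x v = y v) ->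
  (forall v, v \in I -> conjn f x v = conjn f y v) -> x = y.
Proof.
move=> xy_out xy_in.
have gx : glue (restr I x) x = x by apply: glue_restr.
have gy : glue (restr I y) x = y by apply: glue_restr => v /xy_out.
suff rxy : restr I x = restr I y by rewrite -gx -gy rxy.
apply: (@injI x); apply/ffunP => u; rewrite !conjn_subnetE gx gy.
exact: xy_in (valP u).
Qed.

Lemma conjn_subnets_surjective (x y : point V) :
  exists x' : point V, (forall v, v \notin I -> x' v = x v) /\
                       (forall v, v \in I -> conjn f x' v = y v).
Proof.
have [g' _ g'K] := injF_bij (@injI x).
exists (glue (g' (restr I y)) x); split => [v|v vI]; first exact: glue_notin.
have := conjn_subnetE f x (g' (restr I y)) (Sub v vI); rewrite SubK => <-.
by rewrite g'K ffunE SubK.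
Qed.

End SubnetConjugates.

Lemma subnet_locally_surjective (V : finType) (f : network V) (I : {set V}) :
  (forall v, v \in I -> conjn_subnets_injective f (I :\ v)) ->
  forall z, locally_surjective (conjn (subnet f I z)).
Proof.
move=> injI z j b yI; set v := val j; have vI : v \in I := valP j.
pose z' : point V := [ffun w => if w == v then b else z w].
have [x' [x'_out x'_in]] := conjn_subnets_surjective (injI v vI) z' (glue yI z).
exists (restr I x'); split.
  by rewrite ffunE x'_out ?inE ?eqxx // ffunE eqxx.
move=> k kj; rewrite conjn_subnetE glue_restr; last first.
  move=> w wI; rewrite x'_out ?inE ?(negbTE wI) ?andbF // ffunE.
  by case: eqP => // wv; move: wI; rewrite wv vI.
by rewrite x'_in ?glue_val // !inE (valP k) andbT val_eqE.
Qed.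

Lemma subnet_locally_injective (V : finType) (f : network V) (I : {set V}) :
  (forall v, v \in I -> conjn_subnets_injective f (I :\ v)) ->
  forall z, locally_injective (conjn (subnet f I z)).
Proof.
move=> injI z j x x' xj Gxx'; have vI : val j \in I := valP j.
rewrite -(restr_glue x z) -(restr_glue x' z); congr (restr I _).
apply: (conjn_subnets_injective_agree (injI _ vI)) => w; rewrite !inE.
  rewrite negb_and negbK => /orP [/eqP -> | wI]; first by rewrite !glue_val.
  by rewrite !glue_notin.
move=> /andP [wj wI]; have := Gxx' (Sub w wI); rewrite !conjn_subnetE SubK; apply.
by rewrite -val_eqE SubK.
Qed.

Lemma conjn_subnets_injective_all (V : finType) (f : network V) :
  ~ (exists (I : {set V}) (z : point V), I != set0 /\
       (even_self_dual (subnet f I z) \/ odd_self_dual (subnet f I z))) ->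
  forall I, conjn_subnets_injective f I.
Proof.
move=> no_sd I; move Hn: #|I| => n; elim/ltn_ind: n I Hn => n IH I Hn z.
case: (eqVneq I set0) => [I0 | In0].
  move=> x y _; apply/ffunP => u; exfalso.
  by move: (val u) (valP u) => v; rewrite I0 inE.
have injI v : v \in I -> conjn_subnets_injective f (I :\ v).
  by move=> vI; apply: (IH _ _ _ erefl); rewrite -Hn (cardsD1 v I) vI.
have [//|sd] := locally_bijective_conjn (subnet_locally_surjective injI z)
                                        (@subnet_locally_injective _ _ _ injI z).
by case: no_sd; exists I, z.
Qed.

Lemma conjn_injective_unique_fixed_point (W : finType) (h : network W) :
  injective (conjn h) -> unique_fixed_point h.
Proof.
move=> inj; have [g' _ g'K] := injF_bij inj.
pose zero : point W := [ffun _ => false].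
have fixE x : (h x = x) <-> (conjn h x = zero).
  rewrite /conjn; split=> [-> | /ffunP hx]; apply/ffunP => v.
    by rewrite !ffunE addbb.
  by move: (hx v); rewrite !ffunE; case: (h x v); case: (x v).
exists (g' zero); split; first exact/fixE.
by move=> x /fixE hx; apply: inj; rewrite g'K.
Qed.

Lemma self_dual_not_unique_fixed_point (W : finType) (h : network W) (u : W) :
  self_dual h -> ~ unique_fixed_point h.
Proof.
move=> sd [x [hx x_uniq]].
have /x_uniq /ffunP /(_ u) : h (compl x) = compl x by rewrite /compl sd hx.
by rewrite complE; case: (x u).
Qed.

Theorem corollary2 (V : finType) (HV : 0 < #|V|) (f : network V) :
  (forall (I : {set V}) (z : point V), I != set0 ->
     unique_fixed_point (subnet f I z))
  <->
  ~ (exists (I : {set V}) (z : point V), I != set0 /\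
       (even_self_dual (subnet f I z) \/ odd_self_dual (subnet f I z))).
Proof.
split=> [uniq [I [z [In0 sd]]] | no_sd I z _].
  have [v vI] := set0Pn _ In0.
  apply: (self_dual_not_unique_fixed_point (Sub v vI : subT I) _ (uniq I z In0)).
  by case: sd => [[]|[]].
exact/conjn_injective_unique_fixed_point/conjn_subnets_injective_all.
Qed.
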